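(* Let $\ell\ge 2$, $A\ge 2$ and $H\ge \ell+1$ be integers. There exists an episodic tabular MDP with $A$ actions, horizon $H$, at most $S\le 1+A^{\ell}$ states and deterministic transitions, together with a fixed initial state $s_1$, such that every fixed batching policy (for any batching horizon $B\in\{1,\dots,\ell\}$) collects an expected cumulative reward of at most $A^{-\ell/2+1}$ from $s_1$, whereas the optimal value achievable by $\ell$-step lookahead policies from $s_1$ is larger than $1/2$.
   Context: An episodic tabular MDP has finite state space $\mathcal{S}$ ($|\mathcal{S}|=S$), finite action space $\mathcal{A}$ ($|\mathcal{A}|=A$), horizon $H$, reward distributions $\mathcal{R}_h(s,a)$ supported in $[0,1]$ and transition kernels $P_h(\cdot\mid s,a)$; rewards and transitions are independent across time steps but may be arbitrarily correlated across states and actions within a step. The value of a policy is its expected cumulative reward $\mathbb{E}[\sum_{t=1}^H R_t]$. The $\ell$-step lookahead information at step $h$ in state $s$ consists of the realized rewards and next states along all trajectories from $s$ over steps $h,\dots,h+\ell_h-1$ under every deterministic Markov policy (equivalently, the realized reward and next state of every state-action pair reachable from $s$ at each of these steps), where $\ell_h=\min\{\ell,H-h+1\}$; realizations are consistent across trajectories. An $\ell$-step lookahead policy chooses $a_h$ as a function of $s_h$ and the $\ell$-step lookahead information observed at step $h$ (and the history). A fixed batching policy with batching horizon $B\le \ell$ only observes lookahead information at the predefined steps $nB+1$ ($n=0,1,\dots$): at step $nB+1$ it observes the $B$-step lookahead information from $s_{nB+1}$, and for all steps $h\in\{nB+1,\dots,(n+1)B\}$ its action depends only on $s_h$ and this information.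 *)

From HB Require Import structures.
From mathcomp Require Import all_boot all_order all_algebra.
From mathcomp Require Import reals exp.
Set Implicit Arguments. Unset Strict Implicit. Unset Printing Implicit Defensive.
Import Order.TTheory GRing.Theory Num.Theory.
Local Open Scope ring_scope.

(* Steps are 0-indexed: paper step h corresponds to t = h-1, t < H.
   The randomness of step t is an outcome o : Om drawn with probability
   prob t o, independently across steps; it determines the reward and the
   next state of EVERY state-action pair at step t (arbitrary correlation
   within a step). *)
Record mdp (R : realType) (S Ac : finType) := MDP {
  Om : finType;
  om0 : Om;                                   (* dummy outcome for t >= H *)
  prob : nat -> Om -> R;
  rew : nat -> Om -> S -> Ac -> R;
  nxt : nat -> Om -> S -> Ac -> S }.
Arguments Om {R S Ac} m.
Arguments om0 {R S Ac} m.
Arguments prob {R S Ac} m _ _.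
Arguments rew {R S Ac} m _ _ _ _.
Arguments nxt {R S Ac} m _ _ _ _.

Section Defs.
Variables (R : realType) (S Ac : finType) (M : mdp R S Ac).

Definition valid_mdp (H : nat) :=
  [/\ (forall t o, 0 <= prob M t o),
      (forall t, (t < H)%N -> \sum_(o : Om M) prob M t o = 1) &
      (forall t o s a, 0 <= rew M t o s a <= 1)].

Definition deterministic := forall t o o' s a, nxt M t o s a = nxt M t o' s a.

Definition ext (H : nat) (w : {ffun 'I_H -> Om M}) : nat -> Om M :=
  fun t => if @insub nat (fun t => (t < H)%N) _ t is Some i then w i else om0 M.

(* deterministic (history/information dependent) policies: the action at
   step t is a function of the realization; information constraints are
   imposed separately *)
Definition policy := nat -> (nat -> Om M) -> Ac.

Fixpoint state (s1 : S) (pi : policy) (w : nat -> Om M) (t : nat) : S :=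
  match t with
  | 0 => s1
  | t'.+1 => nxt M t' (w t') (state s1 pi w t') (pi t' w)
  end.

Definition ret (H : nat) (s1 : S) (pi : policy) (w : nat -> Om M) : R :=
  \sum_(t < H) rew M t (w t) (state s1 pi w t) (pi t w).

Definition value (H : nat) (s1 : S) (pi : policy) : R :=
  \sum_(w : {ffun 'I_H -> Om M})
     (\prod_(i < H) prob M i (w i)) * ret H s1 pi (ext w).

Fixpoint reach (t : nat) (s : S) (w : nat -> Om M) (k : nat) : {set S} :=
  match k with
  | 0 => [set s]
  | k'.+1 => \bigcup_(x in reach t s w k') \bigcup_(a : Ac)
               [set nxt M (t + k') (w (t + k')) x a]
  end.

(* w and w' induce the same L-step lookahead information at step t from s:
   same realized reward and next state of every pair reachable from s at
   steps t, ..., t+L-1 *)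
Definition same_la (L t : nat) (s : S) (w w' : nat -> Om M) :=
  forall k, (k < L)%N -> forall x, x \in reach t s w k -> forall a,
    rew M (t + k) (w (t + k)) x a = rew M (t + k) (w' (t + k)) x a /\
    nxt M (t + k) (w (t + k)) x a = nxt M (t + k) (w' (t + k)) x a.

Definition lookahead_policy (H l : nat) (s1 : S) (pi : policy) :=
  forall t w w',
    (forall u, (u <= t)%N ->
       state s1 pi w u = state s1 pi w' u /\
       same_la (minn l (H - u)) u (state s1 pi w u) w w') ->
    pi t w = pi t w'.

Definition batching_policy (H B : nat) (s1 : S) (pi : policy) :=
  forall t w w',
    let t0 := (t %/ B * B)%N in
    state s1 pi w t = state s1 pi w' t ->
    state s1 pi w t0 = state s1 pi w' t0 ->
    same_la (minn B (H - t0)) t0 (state s1 pi w t0) w w' ->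
    pi t w = pi t w'.

End Defs.

From HB Require Import structures.
From mathcomp Require Import all_boot all_order all_algebra.
From mathcomp Require Import reals exp zify lra.
Import Order.TTheory GRing.Theory Num.Theory.
Local Open Scope ring_scope.
Set Implicit Arguments. Unset Strict Implicit. Unset Printing Implicit Defensive.

(* The hard instance is a guessing game on words of length l-1 over the A
   actions, each action writing one letter.  A uniformly random target word is
   drawn at step l, and reward 1 is paid there iff the written word equals it.
   An l-step lookahead policy sees the target at step 1 and copies it.  A
   batching policy with horizon B has no information on the target before the
   last batch boundary T = B * floor(l/B) <= l, so its state at T is fixed and
   at most A^(l-T) words are reachable at step l; as l < 2T, its value is at
   most A^(l-T) / A^(l-1) <= A^(1 - l/2). *)

Section Trajectories.
Variables (R : realType) (S Ac : finType) (M : mdp R S Ac).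
Implicit Types (pi : policy M) (w : nat -> Om M).

Lemma state_in_reach (s1 : S) pi w t k :
  state s1 pi w (t + k) \in reach t (state s1 pi w t) w k.
Proof.
elim: k => [|k IH]; first by rewrite addn0 /= set11.
rewrite addnS /=; apply/bigcupP; exists (state s1 pi w (t + k)) => //.
by apply/bigcupP; exists (pi (t + k) w) => //; rewrite set11.
Qed.

Lemma sum_prod_prob H : valid_mdp M H ->
  \sum_(w : {ffun 'I_H -> Om M}) \prod_(i < H) prob M i (w i) = 1.
Proof.
case=> _ prob1 _.
rewrite -(bigA_distr_bigA (fun (i : 'I_H) o => prob M i o)) /=.
by apply: big1 => i _; apply: prob1.
Qed.

Lemma value_cst H (s1 : S) pi c : valid_mdp M H ->
  (forall w, ret H s1 pi w = c) -> value H s1 pi = c.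
Proof.
move=> MH retc; rewrite /value.
under eq_bigr => w _ do rewrite retc.
by rewrite -big_distrl /= sum_prod_prob // mul1r.
Qed.

Lemma batching_state_eq H B (s1 : S) pi n w w' :
  (0 < B)%N -> batching_policy H B s1 pi ->
  (forall t, (t < n * B)%N -> w t = w' t) ->
  forall t, (t <= n * B)%N -> state s1 pi w t = state s1 pi w' t.
Proof.
move=> B0 piB ww'; elim/ltn_ind=> -[//|t] IH tnB /=.
have tt0 : (t %/ B * B <= t)%N := leq_divM t B.
have batch_end : (t %/ B * B + B <= n * B)%N.
  by rewrite -mulSnr leq_mul2r ltn_divLR // tnB orbT.
rewrite IH ?(ltnW tnB) // (ww' t tnB); have -> // : pi t w = pi t w'.
apply: piB.
- exact: IH (ltnW tnB).
- by apply: IH; [rewrite ltnS | apply: leq_trans tt0 (ltnW _)].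
move=> k; rewrite leq_min => /andP [kB _] x _ a.
by rewrite ww' //; apply: leq_trans batch_end; rewrite ltn_add2l.
Qed.

Lemma card_states_shift (I : finType) (f : I -> nat -> Om M) (s1 : S) pi T k :
  deterministic M ->
  (#|[set state s1 pi (f v) (T + k) | v : I]|
     <= #|[set state s1 pi (f v) T | v : I]| * #|Ac| ^ k)%N.
Proof.
move=> detM; elim: k => [|k IH]; first by rewrite addn0 muln1.
set X := [set state s1 pi (f v) (T + k) | v : I] in IH *.
apply: leq_trans
  (_ : #|[set nxt M (T + k) (om0 M) p.1 p.2 | p in setX X [set: Ac]]| <= _)%N.
  apply: subset_leq_card; apply/subsetP => _ /imsetP [v _ ->].
  rewrite addnS /= (detM _ _ (om0 M)).
  apply/imsetP; exists (state s1 pi (f v) (T + k), pi (T + k) (f v)) => //.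
  by rewrite in_setX in_setT andbT imset_f.
apply: leq_trans (leq_imset_card _ _) _.
by rewrite cardsX cardsT expnSr mulnA leq_mul2r IH orbT.
Qed.

End Trajectories.

Lemma ltn_divM_double n d : (0 < d <= n)%N -> (n < (n %/ d * d).*2)%N.
Proof.
case/andP=> d0 dn; have q0 : (0 < n %/ d)%N by rewrite divn_gt0.
have := leq_pmull d q0; have := ltn_pmod n d0; have := divn_eq n d.
move: (n %/ d * d)%N (n %% d)%N => T r; lia.
Qed.

Section GuessingMdp.
Variables (R : realType) (l' A' : nat).
Local Notation l := l'.+2.
Local Notation A := A'.+2.

Definition word := {ffun 'I_l'.+1 -> 'I_A}.
Definition word0 : word := [ffun => ord0].

(* The target drawn at step l is first seen by l-step lookahead at step 1,
   which leaves steps 1, ..., l-1 to write its l-1 letters; this is why step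
   t writes position t-1 (step 0 writes position 0, overwritten at step 1). *)
Definition write (t : nat) (x : word) (a : 'I_A) : word :=
  [ffun j => if val j == t.-1 then a else x j].

Definition nwords : R := #|{: word}|%:R.

Definition guess_mdp : mdp R word 'I_A :=
  @MDP R word 'I_A word word0
    (fun t o => if t == l then nwords^-1 else (o == word0)%:R)
    (fun t o x _ => ((t == l) && (x == o))%:R)
    (fun t _ x a => write t x a).

Lemma nwordsE : nwords = (A ^ l'.+1)%:R.
Proof. by rewrite /nwords card_ffun !card_ord. Qed.

Lemma nwords_gt0 : 0 < nwords.
Proof. by rewrite nwordsE ltr0n expn_gt0. Qed.

Lemma sum_prob_guess t : \sum_(o : word) prob guess_mdp t o = 1.
Proof.
rewrite /=; case: (t == l).
  by rewrite sumr_const -mulr_natr mulVf // gt_eqF // nwords_gt0.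
by rewrite (bigD1 word0) //= eqxx big1 ?addr0 // => o /negbTE ->.
Qed.

Lemma guess_mdp_valid H : valid_mdp guess_mdp H.
Proof.
split=> [t o | t _ | t o x a] /=.
- by case: (t == l); rewrite ?invr_ge0 ler0n.
- exact: sum_prob_guess.
- by rewrite ler0n /=; case: (_ && _).
Qed.

Lemma guess_mdp_deterministic : deterministic guess_mdp.
Proof. by []. Qed.

Definition copy_target : policy guess_mdp :=
  fun t w => if t is t'.+1 then (w l : word) (inord t') else ord0.

Lemma copy_target_state (s1 : word) (w : nat -> word) : state s1 copy_target w l = w l.
Proof.
suff copied k : (k <= l'.+1)%N -> forall j : 'I_l'.+1, (j < k)%N ->
    (state s1 copy_target w k.+1 : word) j = (w l : word) j.
  by apply/ffunP => j; apply: copied.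
elim: k => [//|k IH] kl j jk /=; rewrite ffunE /=.
case: eqP => [jk' | jk'].
  by congr (_ _); apply/val_inj; rewrite /= inordK // jk'.
have jk2 : (j < k)%N by rewrite ltn_neqAle -ltnS jk andbT; apply/eqP.
exact: IH (ltnW kl) j jk2.
Qed.

Section Horizon.
Variable H : nat.
Hypothesis lH : (l < H)%N.
Let l0 : 'I_H := Ordinal lH.

Lemma ret_guess (s1 : word) (pi : policy guess_mdp) (w : nat -> word) :
  ret H s1 pi w = (state s1 pi w l == w l)%:R.
Proof.
rewrite /ret (bigD1 l0) //= eqxx /= big1 ?addr0 // => i /eqP il0 /=.
by case: eqP => // il; case: il0; apply/val_inj.
Qed.

Lemma copy_target_lookahead (s1 : word) : lookahead_policy H l s1 copy_target.
Proof.
move=> [//|t] w w' same_info; rewrite /copy_target.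
have [_ la1] := same_info 1%N isT.
have lt_la : (l'.+1 < minn l (H - 1))%N by rewrite leq_min leqnn ltn_subRL.
have [rew_l _] := la1 _ lt_la _ (state_in_reach s1 copy_target w 1 l'.+1) ord0.
have : rew guess_mdp l (w l) (state s1 copy_target w l) ord0
       = rew guess_mdp l (w' l) (state s1 copy_target w l) ord0 := rew_l.
rewrite copy_target_state /= !eqxx /=.
by case: eqP => [-> | _] // /eqP; rewrite oner_eq0.
Qed.

Lemma value_copy_target (s1 : word) : value H s1 copy_target = 1.
Proof.
apply: value_cst (guess_mdp_valid H) _ => w.
by rewrite ret_guess copy_target_state eqxx.
Qed.

Definition with_target (v : word) : {ffun 'I_H -> Om guess_mdp} :=
  [ffun i => if val i == l then v else word0].

Lemma ext_with_target (v : word) (t : nat) :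
  ext (with_target v) t = if t == l then v else word0.
Proof.
rewrite /ext; case: insubP => [i _ <- | tH]; first by rewrite ffunE.
by case: eqP => // tl; move: tH; rewrite tl lH.
Qed.

Lemma prod_prob_guess (w : {ffun 'I_H -> Om guess_mdp}) :
  \prod_(i < H) prob guess_mdp i (w i)
    = if w == with_target (w l0) then nwords^-1 else 0.
Proof.
rewrite (bigD1 l0) //= eqxx; case: eqP => [-> | not_target].
  rewrite big1 ?mulr1 // => i /eqP il0; rewrite ffunE.
  by case: eqP => [il | _]; [case: il0; apply/val_inj | rewrite eqxx].
have [i] : exists i, w i != with_target (w l0) i.
  apply/existsP; apply: contraT; rewrite negb_exists => /forallP same.
  by case: not_target; apply/ffunP => i; apply/eqP/negPn/same.
move=> wi; have il : val i != l.
  by apply: contraNneq wi => il; rewrite ffunE il eqxx (_ : i = l0) //; exact: val_inj.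
have wi0 : w i != word0 by move: wi; rewrite ffunE (negbTE il).
have il0 : i != l0 by apply: contraNneq il => ->.
by rewrite (bigD1 i) //= (negbTE il) (negbTE wi0) mul0r mulr0.
Qed.

Lemma value_guess (s1 : word) (pi : policy guess_mdp) :
  value H s1 pi
    = nwords^-1 * #|[set v : word | state s1 pi (ext (with_target v)) l == v]|%:R.
Proof.
rewrite /value (partition_big (fun w : {ffun 'I_H -> Om guess_mdp} => w l0) predT) //.
rewrite -sum1_card natr_sum [in RHS]big_mkcond mulr_sumr; apply: eq_bigr => v _.
have target_l0 : with_target v l0 = v by rewrite ffunE /= eqxx.
rewrite (bigD1 (with_target v)); last by rewrite target_l0 eqxx.
rewrite prod_prob_guess target_l0 eqxx big1 => [|w /andP [/eqP wl0 ne]]; last first.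
  by rewrite prod_prob_guess wl0 (negbTE ne) mul0r.
rewrite [LHS]addr0 ret_guess ext_with_target eqxx inE.
by case: eqP.
Qed.

Lemma card_hits_batching (s1 : word) (pi : policy guess_mdp) B :
  (0 < B)%N -> batching_policy H B s1 pi ->
  (#|[set v : word | state s1 pi (ext (with_target v)) l == v]|
     <= A ^ (l - l %/ B * B))%N.
Proof.
move=> B0 piB; set T := (l %/ B * B)%N.
have Tl : (T <= l)%N := leq_divM l B.
have blind v : state s1 pi (ext (with_target v)) T
             = state s1 pi (ext (with_target word0)) T.
  apply: batching_state_eq B0 piB _ _ (leqnn _) => t tT.
  by rewrite !ext_with_target (ltn_eqF (leq_trans tT Tl)).
have one_start : (#|[set state s1 pi (ext (with_target v)) T | v : word]| <= 1)%N.
  rewrite -(cards1 (state s1 pi (ext (with_target word0)) T)).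
  by apply/subset_leq_card/subsetP => _ /imsetP [v _ ->]; rewrite blind set11.
apply: (@leq_trans
  #|[set state s1 pi (ext (with_target v)) (T + (l - T)) | v : word]|).
  apply/subset_leq_card/subsetP => v; rewrite inE subnKC // => /eqP hit.
  by apply/imsetP; exists v.
have := card_states_shift (fun v : word => ext (with_target v)) s1 pi T (l - T)
          guess_mdp_deterministic.
rewrite card_ord => /leq_trans; apply.
by rewrite -[X in (_ <= X)%N]mul1n leq_mul2r one_start orbT.
Qed.

End Horizon.

Lemma guess_value_bound B : (1 <= B <= l)%N ->
  nwords^-1 * (A ^ (l - l %/ B * B))%:R <= powR (A%:R : R) (1 - l%:R / 2).
Proof.
move=> /ltn_divM_double; have := leq_divM l B.
move: (l %/ B * B)%N => T Tl lT.
have splitA : (A ^ l'.+1 = A ^ (l - T) * A ^ (T - 1))%N by rewrite -expnD; congr expn; lia.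
rewrite nwordsE splitA natrM invfM mulrAC mulVf ?mul1r ?pnatr_eq0 ?expn_eq0 //.
rewrite natrX -powR_mulrn ?ler0n // -powRN ler_powR ?ler1n // natrB; last lia.
have : (l%:R : R) < 2 * T%:R by rewrite -natrM ltr_nat mul2n.
lra.
Qed.
End GuessingMdp.

Theorem claim1 (R : realType) (l A H : nat) :
  (2 <= l)%N -> (2 <= A)%N -> (l.+1 <= H)%N ->
  exists (S Ac : finType) (M : mdp R S Ac) (s1 : S),
    [/\ #|Ac| = A /\ (#|S| <= 1 + A ^ l)%N, valid_mdp M H, deterministic M,
        (forall B, (1 <= B <= l)%N -> forall pi : policy M,
           batching_policy H B s1 pi ->
           value H s1 pi <= powR (A%:R : R) (1 - l%:R / 2)) &
        (exists pi : policy M, lookahead_policy H l s1 pi /\ 1 / 2 < value H s1 pi)].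
Proof.
case: l => [|[|l']] // _; case: A => [|[|A']] // _ lH.
exists (word l' A'), 'I_A'.+2, (guess_mdp R l' A'), (word0 l' A'); split.
- rewrite card_ord card_ffun !card_ord; split=> //.
  by rewrite (leq_trans _ (leq_addl _ _)) // leq_exp2l.
- exact: guess_mdp_valid.
- exact: guess_mdp_deterministic.
- move=> B B1l pi piB; rewrite (value_guess lH).
  apply: le_trans (guess_value_bound R A' B1l); rewrite ler_wpM2l ?invr_ge0 ?ler0n //.
  by rewrite ler_nat (card_hits_batching lH) //; case/andP: B1l.
- exists (@copy_target R l' A'); split; first exact: copy_target_lookahead.
  by rewrite value_copy_target // ltr_pdivrMr // mul1r ltr1n.
Qed.
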